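(* Let $\gamma$ be a screw parabolic isometry of $\mathbb{H}^4$ with fixed point $v$ and twisting plane $P$. Then a plane $Q\subset\mathbb{H}^4$ is orthogonal to $P$ through a line (of $P\cap Q$) having $v$ as an endpoint at infinity if and only if $\partial Q\in\mathcal{K}_\gamma$.
   Context: Identify $\partial\mathbb{H}^4$ with $\widehat{\mathbb{R}^3}$. A screw parabolic isometry $\gamma$ is conjugate, by a Möbius map $\phi$ sending its fixed point $v$ to $\infty$, to the Poincaré extension of $x\mapsto Ax+b$ with $A\in\mathrm{SO}(3)$ nontrivial, $Ab=b$, $b\ne0$. Its rotational part is the conjugate of $x\mapsto Ax$, a type-I elliptic isometry whose fixed plane is the twisting plane $P$ of $\gamma$; $\partial P$ corresponds to the line $\mathbb{R}b\cup\{\infty\}$. The permuted pencil $\mathcal{F}_\gamma$ is the image under $\phi^{-1}$ of the set of Euclidean planes orthogonal to $b$ (with $\infty$ added). The twisting pencil $\mathcal{R}_\gamma$ is the set of boundaries of hyperplanes containing $P$. The half-turn bank is $\mathcal{K}_\gamma=\{s\cap t: s\in\mathcal{F}_\gamma,\ t\in\mathcal{R}_\gamma\}$. *)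

(* Hyperboloid (Lorentz) model of H^4 in R^{4,1}, with
   light-cone coordinates x = (y, u, w), y in R^3, and quadratic form
   <x,x> = |y|^2 - 2 u w.  The ideal boundary is identified with
   \hat{R^3} = option 'rV_3 (None = infinity) via
     Some y  |->  ray of (y, 1, |y|^2/2),     None |-> ray of (0, 0, 1),
   which is the standard identification making the Poincare extension of a
   Euclidean motion x |-> x A + b a linear Lorentz map (pext below). *)
From HB Require Import structures.
From mathcomp Require Import all_boot all_order all_algebra.
From mathcomp Require Import all_classical all_reals.
Set Implicit Arguments. Unset Strict Implicit. Unset Printing Implicit Defensive.
Import Order.TTheory GRing.Theory Num.Theory.
Local Open Scope ring_scope.
Local Open Scope classical_set_scope.

Section Hyp.
Variable R : realType.

Definition ys (x : 'rV[R]_5) : 'rV[R]_3 := @lsubmx R 1 3 2 x.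
Definition uc (x : 'rV[R]_5) : R := (@rsubmx R 1 3 2 x) 0 ord0.
Definition wc (x : 'rV[R]_5) : R := (@rsubmx R 1 3 2 x) 0 ord_max.
Definition mk (y : 'rV[R]_3) (u w : R) : 'rV[R]_5 :=
  @row_mx R 1 3 2 y (\row_(j < 2) if j == ord0 then u else w).

Definition dot (y z : 'rV[R]_3) : R := (y *m z^T) 0 0.

Definition lform (x z : 'rV[R]_5) : R :=
  dot (ys x) (ys z) - uc x * wc z - wc x * uc z.

Definition H4 : set 'rV[R]_5 := [set x | lform x x = -1 /\ 0 < uc x].

Definition isom (M : 'M[R]_5) : Prop :=
  (forall x z, lform (x *m M) (z *m M) = lform x z) /\
  (forall x, H4 x -> H4 (x *m M)).

Definition bpt (p : option 'rV[R]_3) : 'rV[R]_5 :=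
  match p with
  | None => mk 0 0 1
  | Some y => mk y 1 (dot y y / 2)
  end.

Definition bmap (M : 'M[R]_5) (p q : option 'rV[R]_3) : Prop :=
  exists c : R, 0 < c /\ bpt p *m M = c *: bpt q.

(* Poincare extension of the Euclidean similarity y |-> y *m A + b
   (row-vector convention) *)
Definition pext (A : 'M[R]_3) (b : 'rV[R]_3) (x : 'rV[R]_5) : 'rV[R]_5 :=
  mk (ys x *m A + uc x *: b) (uc x)
     (wc x + dot b (ys x *m A) + uc x * dot b b / 2).

Definition in_span (S : set 'rV[R]_5) (x : 'rV[R]_5) : Prop :=
  exists k (V : 'M[R]_(k, 5)), (forall i, S (row i V)) /\ (x <= V)%MS.

Definition is_kplane (k : nat) (S : set 'rV[R]_5) : Prop :=
  exists V : 'M[R]_(k.+1, 5), \rank V = k.+1 /\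
    S = [set x | H4 x /\ (x <= V)%MS] /\ (exists x, S x).
Definition is_line := is_kplane 1.
Definition is_plane := is_kplane 2.
Definition is_hyperplane := is_kplane 3.

Definition bdry (S : set 'rV[R]_5) : set (option 'rV[R]_3) :=
  [set p | in_span S (bpt p)].

(* two planes P, Q meeting along a line P `&` Q are orthogonal along it:
   the normal directions of the line inside P and inside Q are orthogonal *)
Definition ortho_along (P Q : set 'rV[R]_5) : Prop :=
  forall p q, in_span P p -> in_span Q q ->
    (forall z, (P `&` Q) z -> lform p z = 0) ->
    (forall z, (P `&` Q) z -> lform q z = 0) -> lform p q = 0.

Definition orth_through (P Q : set 'rV[R]_5) (v : option 'rV[R]_3) : Prop :=
  is_line (P `&` Q) /\ bdry (P `&` Q) v /\ ortho_along P Q.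

(* screw parabolic normal form: g (the isometry extending the Moebius map phi)
   sends v to infinity and conjugates gamma to the Poincare extension of
   y |-> y A + b, A in SO(3) nontrivial, A b = b, b <> 0 *)
Definition screw_normal_form (gamma g : 'M[R]_5) (A : 'M[R]_3) (b : 'rV[R]_3)
    (v : option 'rV[R]_3) : Prop :=
  isom gamma /\ isom g /\ (A *m A^T = 1%:M /\ \det A = 1) /\ A != 1%:M /\
  (b *m A = b /\ b != 0) /\ bmap g v None /\
  (forall x, x *m gamma *m g = pext A b (x *m g)).

(* twisting plane: fixed set in H^4 of the rotational part
   g o (Poincare ext. of y |-> y A) o g^-1 *)
Definition twisting_plane (g : 'M[R]_5) (A : 'M[R]_3) : set 'rV[R]_5 :=
  [set x | H4 x /\ pext A 0 (x *m g) = x *m g].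

(* permuted pencil: phi^-1 of the Euclidean planes orthogonal to b, plus oo *)
Definition permuted_pencil (g : 'M[R]_5) (b : 'rV[R]_3)
    : set (set (option 'rV[R]_3)) :=
  [set s | exists c : R, s = [set p | exists q, bmap g p q /\
            (q = None \/ exists y, q = Some y /\ dot y b = c)]].

Definition twisting_pencil (P : set 'rV[R]_5) : set (set (option 'rV[R]_3)) :=
  [set t | exists Hh, is_hyperplane Hh /\ P `<=` Hh /\ t = bdry Hh].

Definition half_turn_bank (g : 'M[R]_5) (A : 'M[R]_3) (b : 'rV[R]_3)
    : set (set (option 'rV[R]_3)) :=
  [set k | exists s t, permuted_pencil g b s /\
     twisting_pencil (twisting_plane g A) t /\ k = s `&` t].

End Hyp.

From mathcomp Require Import all_boot all_order all_algebra.
From mathcomp Require Import all_classical all_reals.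
From mathcomp Require Import ring lra zify.
Set Implicit Arguments. Unset Strict Implicit. Unset Printing Implicit Defensive.
Import Order.TTheory GRing.Theory Num.Theory.
Local Open Scope ring_scope.
Local Open Scope classical_set_scope.

(* After conjugating by [g], the fixed point [v] is at infinity and the
   twisting plane [P] is the vertical half-plane above the axis [R b] of the
   screw motion.  A plane [Q] meets [P] orthogonally along a line ending at
   infinity exactly when [Q] is the vertical half-plane above a Euclidean line
   [t b + R y] with [y] orthogonal to [b].  The boundary of such a plane is
   that line together with infinity, i.e. the intersection of the Euclidean
   plane [x.b = t |b|^2] of the permuted pencil with the plane spanned by [b]
   and [y], which is the boundary of a hyperplane containing [P]; conversely
   such an intersection determines the null rays, hence the span, of [Q]. *)

Section Basics.
Variable R : realType.
Implicit Types (x z : 'rV[R]_5) (y : 'rV[R]_3).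

Lemma ysD x z : ys (x + z) = ys x + ys z.
Proof. by apply/rowP=> j; rewrite !mxE. Qed.
Lemma ysZ a x : ys (a *: x) = a *: ys x.
Proof. by apply/rowP=> j; rewrite !mxE. Qed.
Lemma ucD x z : uc (x + z) = uc x + uc z.
Proof. by rewrite /uc !mxE. Qed.
Lemma ucZ a x : uc (a *: x) = a * uc x.
Proof. by rewrite /uc !mxE. Qed.
Lemma wcD x z : wc (x + z) = wc x + wc z.
Proof. by rewrite /wc !mxE. Qed.
Lemma wcZ a x : wc (a *: x) = a * wc x.
Proof. by rewrite /wc !mxE. Qed.

Lemma ys_mk y u w : ys (mk y u w) = y.
Proof. by rewrite /ys /mk row_mxKl. Qed.
Lemma uc_mk y u w : uc (mk y u w) = u.
Proof. by rewrite /uc /mk row_mxKr mxE. Qed.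
Lemma wc_mk y u w : wc (mk y u w) = w.
Proof. by rewrite /wc /mk row_mxKr mxE. Qed.

Lemma mk_eta x : x = mk (ys x) (uc x) (wc x).
Proof.
rewrite /mk; have := hsubmxK (x : 'M[R]_(1, 3 + 2)).
move=> {1}<-; rewrite /ys.
have -> : rsubmx (x : 'M[R]_(1, 3 + 2)) = \row_j (if j == ord0 then uc x else wc x) :> 'M[R]_(1, 2).
  apply/rowP => j; rewrite mxE.
  case: j => [[|[|//]] Hj].
  - by rewrite /uc; congr (rsubmx (x : 'M[R]_(1, 3 + 2)) 0 _); apply: val_inj.
  - by rewrite /wc; congr (rsubmx (x : 'M[R]_(1, 3 + 2)) 0 _); apply: val_inj.
by [].
Qed.

Lemma ext5 x z : ys x = ys z -> uc x = uc z -> wc x = wc z -> x = z.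
Proof. by rewrite (mk_eta x) (mk_eta z) !ys_mk !uc_mk !wc_mk => -> -> ->. Qed.

Lemma ys0 : ys (0 : 'rV[R]_5) = 0. Proof. by apply/rowP=> j; rewrite !mxE. Qed.
Lemma uc0 : uc (0 : 'rV[R]_5) = 0. Proof. by rewrite /uc !mxE. Qed.
Lemma wc0 : wc (0 : 'rV[R]_5) = 0. Proof. by rewrite /wc !mxE. Qed.
Lemma ysN x : ys (- x) = - ys x. Proof. by apply/rowP=> j; rewrite !mxE. Qed.
Lemma ucN x : uc (- x) = - uc x. Proof. by rewrite /uc !mxE. Qed.
Lemma wcN x : wc (- x) = - wc x. Proof. by rewrite /wc !mxE. Qed.
Definition coordE := (ysD, ysZ, ucD, ucZ, wcD, wcZ, ys_mk, uc_mk, wc_mk,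
  ys0, uc0, wc0, ysN, ucN, wcN).

Definition i0 : 'I_3 := @Ordinal 3 0 isT.
Definition i1 : 'I_3 := @Ordinal 3 1 isT.
Definition i2 : 'I_3 := @Ordinal 3 2 isT.

Lemma rv3P y y' : y 0 i0 = y' 0 i0 -> y 0 i1 = y' 0 i1 -> y 0 i2 = y' 0 i2 -> y = y'.
Proof.
move=> h0 h1 h2; apply/rowP => j; case: j => [[|[|[|//]]] Hj].
- by rewrite (_ : Ordinal Hj = i0) //; apply: val_inj.
- by rewrite (_ : Ordinal Hj = i1) //; apply: val_inj.
- by rewrite (_ : Ordinal Hj = i2) //; apply: val_inj.
Qed.

Lemma dot3 y y' : dot y y' = y 0 i0 * y' 0 i0 + y 0 i1 * y' 0 i1 + y 0 i2 * y' 0 i2.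
Proof.
rewrite /dot mxE !big_ord_recl big_ord0 !mxE addr0 addrA.
by congr (_ * _ + _ * _ + _ * _); congr (_ 0 _); apply: val_inj.
Qed.

Lemma dotC y y' : dot y y' = dot y' y.
Proof. rewrite !dot3; ring. Qed.
Lemma dotDl y1 y2 y' : dot (y1 + y2) y' = dot y1 y' + dot y2 y'.
Proof. rewrite !dot3 !mxE; ring. Qed.
Lemma dotDr y y1 y2 : dot y (y1 + y2) = dot y y1 + dot y y2.
Proof. rewrite !dot3 !mxE; ring. Qed.
Lemma dotZl a y y' : dot (a *: y) y' = a * dot y y'.
Proof. rewrite !dot3 !mxE; ring. Qed.
Lemma dotZr a y y' : dot y (a *: y') = a * dot y y'.
Proof. rewrite !dot3 !mxE; ring. Qed.
Lemma dotNl y y' : dot (- y) y' = - dot y y'.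
Proof. rewrite !dot3 !mxE; ring. Qed.
Lemma dotNr y y' : dot y (- y') = - dot y y'.
Proof. rewrite !dot3 !mxE; ring. Qed.
Lemma dot0l y : dot 0 y = 0.
Proof. rewrite !dot3 !mxE; ring. Qed.
Lemma dot0r y : dot y 0 = 0.
Proof. rewrite !dot3 !mxE; ring. Qed.
Lemma dot_ge0 y : 0 <= dot y y.
Proof. rewrite dot3; nra. Qed.
Lemma dot_eq0 y : dot y y = 0 -> y = 0.
Proof.
rewrite dot3 => h; apply: rv3P; rewrite mxE; nra.
Qed.
Lemma dot_gt0 y : y != 0 -> 0 < dot y y.
Proof.
move=> hy; rewrite lt_neqAle dot_ge0 andbT; apply/eqP => h.
by move/eqP: hy; apply; apply: dot_eq0.
Qed.

Definition dotE := (dotDl, dotDr, dotZl, dotZr, dotNl, dotNr, dot0l, dot0r).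

Lemma lform_mk y u w y' u' w' :
  lform (mk y u w) (mk y' u' w') = dot y y' - u * w' - w * u'.
Proof. by rewrite /lform !coordE. Qed.

Lemma lformC x z : lform x z = lform z x.
Proof. rewrite /lform dotC; ring. Qed.
Lemma lformDl x1 x2 z : lform (x1 + x2) z = lform x1 z + lform x2 z.
Proof. rewrite /lform !coordE !dotE; ring. Qed.
Lemma lformDr z x1 x2 : lform z (x1 + x2) = lform z x1 + lform z x2.
Proof. rewrite /lform !coordE !dotE; ring. Qed.
Lemma lformZl a x z : lform (a *: x) z = a * lform x z.
Proof. rewrite /lform !coordE !dotE; ring. Qed.
Lemma lformZr a x z : lform z (a *: x) = a * lform z x.
Proof. rewrite /lform !coordE !dotE; ring. Qed.
Lemma lformNl x z : lform (- x) z = - lform x z.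
Proof. rewrite /lform !coordE !dotE; ring. Qed.
Lemma lformNr x z : lform z (- x) = - lform z x.
Proof. rewrite /lform !coordE !dotE; ring. Qed.
Lemma lform0l z : lform 0 z = 0.
Proof. rewrite /lform !coordE !dotE; ring. Qed.
Lemma lform0r z : lform z 0 = 0.
Proof. rewrite /lform !coordE !dotE; ring. Qed.
Definition lformE := (lformDl, lformDr, lformZl, lformZr, lformNl, lformNr, lform0l, lform0r).

End Basics.

Section Isom.
Variable R : realType.
Implicit Types (x z n k : 'rV[R]_5) (y : 'rV[R]_3) (M : 'M[R]_5) (p q : option 'rV[R]_3).

Lemma lform_self x : lform x x = dot (ys x) (ys x) - 2 * uc x * wc x.
Proof. rewrite /lform; ring. Qed.

Lemma unit_uc_neq0 x : lform x x = -1 -> uc x != 0.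
Proof.
rewrite lform_self => h; apply/eqP => h0; move: h; rewrite h0.
have := dot_ge0 (ys x); lra.
Qed.

Lemma H4_or_opp x : lform x x = -1 -> H4 x \/ H4 (- x).
Proof.
move=> h; have := unit_uc_neq0 h; rewrite neq_lt => /orP [hn|hp].
- right; split; first by rewrite lformNl lformNr opprK.
  by rewrite ucN oppr_gt0.
- by left.
Qed.

Lemma lform_nondeg x : (forall z, lform x z = 0) -> x = 0.
Proof.
move=> h; have h1 := h (mk (ys x) 0 0); have h2 := h (mk 0 1 0); have h3 := h (mk 0 0 1).
move: h1 h2 h3; rewrite /lform !coordE !dotE => h1 h2 h3.
apply: ext5; rewrite !coordE.
- by apply: dot_eq0; lra.
- lra.
- lra.
Qed.

Lemma isom_unit M : isom M -> M \in unitmx.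
Proof.
move=> [hl _]; rewrite -row_free_unit -kermx_eq0; apply/eqP.
apply/row_matrixP => i; rewrite row0.
apply: lform_nondeg => z.
have hk : row i (kermx M) *m M = 0 by rewrite -row_mul mulmx_ker row0.
have -> : lform (row i (kermx M)) z = lform (row i (kermx M) *m M) (z *m M) by rewrite hl.
by rewrite hk lform0l.
Qed.

Lemma isom_inv M : isom M -> isom (invmx M).
Proof.
move=> hM; have hu := isom_unit hM; case: hM => [hl hh]; split.
- by move=> x z; rewrite -hl !mulmxKV.
- move=> x hx.
  have h1 : lform (x *m invmx M) (x *m invmx M) = -1.
    by rewrite -hl mulmxKV //; case: hx.
  case: (H4_or_opp h1) => // hn.
  have := hh _ hn; rewrite mulNmx mulmxKV // => -[_].
  by rewrite ucN oppr_gt0; case: hx => _ /[swap] /lt_trans /[apply]; rewrite ltxx.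
Qed.

Lemma H4_isomE M x : isom M -> H4 (x *m M) <-> H4 x.
Proof.
move=> hM; split; last by case: hM => _; apply.
move=> h; have := (isom_inv hM).2 _ h; rewrite mulmxK //; exact: isom_unit.
Qed.

Lemma lform_bpt p : lform (bpt p) (bpt p) = 0.
Proof.
case: p => [y|]; rewrite /bpt lform_mk ?dotE; lra.
Qed.

Definition base_point : 'rV[R]_5 := @mk R 0 1 (1/2).
Lemma H4_base_point : H4 base_point.
Proof. split; rewrite /base_point ?lform_mk ?coordE ?dotE; lra. Qed.

Lemma lform_bpt_H4_lt0 p k : H4 k -> lform (bpt p) k < 0.
Proof.
case=> hk hu; case: p => [y|]; rewrite /bpt.
- move: hk; rewrite (mk_eta k) !lform_mk => hk.
  have hsq := dot_ge0 (ys k - uc k *: y); move: hsq; rewrite !dotE => hsq.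
  rewrite (dotC (ys k) y) in hsq.
  suff : uc k * (dot y (ys k) - 1 * wc k - dot y y / 2 * uc k) < 0.
    by rewrite pmulr_rlt0.
  nra.
- rewrite (mk_eta k) lform_mk !dotE; nra.
Qed.

Lemma null_future_cases n k : lform n n = 0 -> H4 k -> lform n k < 0 ->
  0 < uc n \/ (uc n = 0 /\ ys n = 0 /\ 0 < wc n).
Proof.
move=> hn [hk hu] hl.
case: (ltgtP (uc n) 0) => ha; last 1 first.
- right; have hz : ys n = 0.
    by apply: dot_eq0; move: hn; rewrite lform_self ha; lra.
  split => //; split => //.
  move: hl; rewrite /lform hz ha dot0l; nra.
- (* reverse Cauchy-Schwarz: with [uc n < 0], [n] pairs positively with H^4 *)
  exfalso.
  move: hn hk hl; rewrite !lform_self /lform.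
  move=> hn hk hl.
  have hsq := dot_ge0 ((- uc n) *: ys k + uc k *: ys n).
  move: hsq; rewrite !dotE (dotC (ys k) (ys n)) => hsq.
  have hP : 0 < - uc n * uc k by nra.
  have hPL : - uc n * uc k * (dot (ys n) (ys k) - uc n * wc k - wc n * uc k) < 0.
    by rewrite pmulr_rlt0.
  have e1 : uc n ^+ 2 * (dot (ys k) (ys k) - 2 * uc k * wc k) = uc n ^+ 2 * (-1) by rewrite hk.
  have e2 : uc k ^+ 2 * (dot (ys n) (ys n) - 2 * uc n * wc n) = 0 by rewrite hn mulr0.
  have ha2 : 0 < uc n ^+ 2 by rewrite exprn_even_gt0 //= lt_eqF.
  nra.
- by left.
Qed.

Lemma bmap_total M p : isom M -> exists q, bmap M p q.
Proof.
move=> hM; set n := bpt p *m M.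
have hn : lform n n = 0 by rewrite /n hM.1 lform_bpt.
have hk := hM.2 _ H4_base_point.
have hl : lform n (base_point *m M) < 0.
  by rewrite /n hM.1; apply: lform_bpt_H4_lt0; exact: H4_base_point.
case: (null_future_cases hn hk hl) => [hu | [hu [hy hw]]].
- have hu0 : uc n != 0 by rewrite gt_eqF.
  exists (Some ((uc n)^-1 *: ys n)); exists (uc n); split => //.
  rewrite -/n; apply: ext5; rewrite /bpt !coordE ?dotE.
  + by rewrite scalerA divff ?scale1r.
  + by rewrite mulr1.
  + move: hn; rewrite lform_self => hn.
    have hd : dot (ys n) (ys n) = 2 * uc n * wc n by lra.
    by rewrite hd; field.
- exists (None : option 'rV[R]_3); exists (wc n); split => //.
  rewrite -/n; apply: ext5; rewrite /bpt !coordE ?hy ?hu; rewrite ?scaler0 //; ring.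
Qed.

End Isom.

Arguments base_point {R}.
Arguments H4_base_point {R}.

Lemma eqmx_sub_rank (F : fieldType) m1 m2 n (A : 'M[F]_(m1, n)) (B : 'M[F]_(m2, n)) :
  (A <= B)%MS -> \rank A = \rank B -> (A :=: B)%MS.
Proof. by move=> sAB rAB; apply/eqmxP; rewrite -(mxrank_leqif_eq sAB).2 rAB. Qed.

Section RowSeq.
Variable K : fieldType.
Variable n : nat.
Implicit Types (x z : 'rV[K]_n).

Definition rowseq_mx k (F : seq 'rV[K]_n) : 'M[K]_(k, n) := \matrix_(i < k) nth 0 F i.

Lemma row_rowseq_mx k F (i : 'I_k) : row i (rowseq_mx k F) = nth 0 F i.
Proof. by rewrite rowK. Qed.

Lemma sub_rowseq_mxP k F z :
  (z <= rowseq_mx k F)%MS <-> exists c : 'rV[K]_k, z = \sum_(i < k) c 0 i *: nth 0 F i.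
Proof.
split.
- move/submxP => [D ->]; exists D; rewrite mulmx_sum_row.
  by apply: eq_bigr => i _; rewrite row_rowseq_mx.
- move=> [c ->]; apply/submxP; exists c; rewrite mulmx_sum_row.
  by apply: eq_bigr => i _; rewrite row_rowseq_mx.
Qed.

Lemma rank_rowseq_mx k F :
  (forall c : 'rV[K]_k, \sum_(i < k) c 0 i *: nth 0 F i = 0 -> c = 0) ->
  \rank (rowseq_mx k F) = k.
Proof.
move=> hind; apply/eqP; rewrite -/(row_free _) -kermx_eq0; apply/eqP.
apply/row_matrixP => i; rewrite row0; apply: hind.
have := mulmx_ker (rowseq_mx k F); move/(congr1 (row i)); rewrite row_mul row0.
rewrite mulmx_sum_row => hs; rewrite -[RHS]hs.
by apply: eq_bigr => j _; rewrite row_rowseq_mx.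
Qed.

Lemma sub_rowseq2P a1 a2 z :
  (z <= rowseq_mx 2 [:: a1; a2])%MS <-> exists c1 c2, z = c1 *: a1 + c2 *: a2.
Proof.
rewrite sub_rowseq_mxP; split.
- by move=> [c ->]; exists (c 0 ord0), (c 0 (lift ord0 ord0)); rewrite !big_ord_recl big_ord0 addr0.
- move=> [c1 [c2 ->]]; exists (\row_(i < 2) nth 0 [:: c1; c2] i).
  by rewrite !big_ord_recl big_ord0 addr0 !mxE.
Qed.

Lemma sub_rowseq3P a1 a2 a3 z :
  (z <= rowseq_mx 3 [:: a1; a2; a3])%MS <->
  exists c1 c2 c3, z = c1 *: a1 + c2 *: a2 + c3 *: a3.
Proof.
rewrite sub_rowseq_mxP; split.
- move=> [c ->]; exists (c 0 ord0), (c 0 (lift ord0 ord0)), (c 0 (lift ord0 (lift ord0 ord0))).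
  by rewrite !big_ord_recl big_ord0 addr0 addrA.
- move=> [c1 [c2 [c3 ->]]]; exists (\row_(i < 3) nth 0 [:: c1; c2; c3] i).
  by rewrite !big_ord_recl big_ord0 addr0 !mxE addrA.
Qed.

Lemma sub_rowseq4P a1 a2 a3 a4 z :
  (z <= rowseq_mx 4 [:: a1; a2; a3; a4])%MS <->
  exists c1 c2 c3 c4, z = c1 *: a1 + c2 *: a2 + c3 *: a3 + c4 *: a4.
Proof.
rewrite sub_rowseq_mxP; split.
- move=> [c ->]; exists (c 0 ord0), (c 0 (lift ord0 ord0)), (c 0 (lift ord0 (lift ord0 ord0))),
    (c 0 (lift ord0 (lift ord0 (lift ord0 ord0)))).
  by rewrite !big_ord_recl big_ord0 addr0 !addrA.
- move=> [c1 [c2 [c3 [c4 ->]]]]; exists (\row_(i < 4) nth 0 [:: c1; c2; c3; c4] i).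
  by rewrite !big_ord_recl big_ord0 addr0 !mxE !addrA.
Qed.

Lemma rank_rowseq2 a1 a2 :
  (forall c1 c2, c1 *: a1 + c2 *: a2 = 0 -> c1 = 0 /\ c2 = 0) ->
  \rank (rowseq_mx 2 [:: a1; a2]) = 2%N.
Proof.
move=> h; apply: rank_rowseq_mx => c; rewrite !big_ord_recl big_ord0 addr0 => /h [h1 h2].
apply/rowP => i; rewrite mxE; case: i => [[|[|//]] Hi].
- by rewrite -h1; congr (c 0 _); apply: val_inj.
- by rewrite -h2; congr (c 0 _); apply: val_inj.
Qed.

Lemma rank_rowseq3 a1 a2 a3 :
  (forall c1 c2 c3, c1 *: a1 + c2 *: a2 + c3 *: a3 = 0 -> [/\ c1 = 0, c2 = 0 & c3 = 0]) ->
  \rank (rowseq_mx 3 [:: a1; a2; a3]) = 3%N.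
Proof.
move=> h; apply: rank_rowseq_mx => c; rewrite !big_ord_recl big_ord0 addr0 addrA => /h [h1 h2 h3].
apply/rowP => i; rewrite mxE; case: i => [[|[|[|//]]] Hi].
- by rewrite -h1; congr (c 0 _); apply: val_inj.
- by rewrite -h2; congr (c 0 _); apply: val_inj.
- by rewrite -h3; congr (c 0 _); apply: val_inj.
Qed.

Lemma rank_rowseq4 a1 a2 a3 a4 :
  (forall c1 c2 c3 c4, c1 *: a1 + c2 *: a2 + c3 *: a3 + c4 *: a4 = 0 ->
     [/\ c1 = 0, c2 = 0, c3 = 0 & c4 = 0]) ->
  \rank (rowseq_mx 4 [:: a1; a2; a3; a4]) = 4%N.
Proof.
move=> h; apply: rank_rowseq_mx => c.
rewrite !big_ord_recl big_ord0 addr0 !addrA => /h [h1 h2 h3 h4].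
apply/rowP => i; rewrite mxE; case: i => [[|[|[|[|//]]]] Hi].
- by rewrite -h1; congr (c 0 _); apply: val_inj.
- by rewrite -h2; congr (c 0 _); apply: val_inj.
- by rewrite -h3; congr (c 0 _); apply: val_inj.
- by rewrite -h4; congr (c 0 _); apply: val_inj.
Qed.

End RowSeq.

Section Span.
Variable R : realType.
Implicit Types (x z h : 'rV[R]_5) (Z : 'rV[R]_5 -> Prop) (S : set 'rV[R]_5).

Definition lin_closed Z := Z 0 /\ (forall a x z, Z x -> Z z -> Z (a *: x + z)).

Lemma linZ Z a x : lin_closed Z -> Z x -> Z (a *: x).
Proof. by move=> [h0 h] hx; rewrite -[_ *: _]addr0; apply: h. Qed.
Lemma linD Z x z : lin_closed Z -> Z x -> Z z -> Z (x + z).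
Proof. by move=> [h0 h] hx hz; rewrite -[x]scale1r; apply: h. Qed.
Lemma linN Z x : lin_closed Z -> Z x -> Z (- x).
Proof. by move=> hl hx; rewrite -scaleN1r; apply: linZ. Qed.
Lemma linB Z x z : lin_closed Z -> Z x -> Z z -> Z (x - z).
Proof. by move=> hl hx hz; apply: linD => //; apply: linN. Qed.

Lemma lin_sum Z k (c : 'I_k -> R) (F : 'I_k -> 'rV[R]_5) :
  lin_closed Z -> (forall i, Z (F i)) -> Z (\sum_(i < k) c i *: F i).
Proof.
move=> hl hF; apply: (big_rec (fun v => Z v)); first by case: hl.
by move=> i v _ hv; apply: (hl.2 _ _ _ (hF i) hv).
Qed.

Lemma lin_closed_submx m (M : 'M[R]_(m, 5)) : lin_closed (fun x => (x <= M)%MS).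
Proof.
split; first exact: sub0mx.
by move=> a x z hx hz; rewrite addmx_sub // scalemx_sub.
Qed.

Lemma lin_closedI Z1 Z2 : lin_closed Z1 -> lin_closed Z2 -> lin_closed (fun x => Z1 x /\ Z2 x).
Proof.
move=> [a0 a] [b0 b]; split => // c x z [h1 h2] [h3 h4]; split; [exact: a | exact: b].
Qed.

Lemma lin_closed_preim Z (M : 'M[R]_5) : lin_closed Z -> lin_closed (fun x => Z (x *m M)).
Proof.
move=> [h0 h]; split; first by rewrite mul0mx.
by move=> a x z hx hz; rewrite mulmxDl -scalemxAl; apply: h.
Qed.

Lemma lform_perp_span S w x :
  (forall z, S z -> lform w z = 0) -> in_span S x -> lform w x = 0.
Proof.
move=> hS [k [V [hV /submxP [D ->]]]]; rewrite mulmx_sum_row.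
apply: (lin_sum (Z := fun z => lform w z = 0)) => [|i]; last exact: hS.
by split => [|a u z hu hz]; rewrite ?lformE ?hu ?hz ?mulr0 ?addr0.
Qed.

Lemma in_spanS S S' x : S `<=` S' -> in_span S x -> in_span S' x.
Proof. by move=> hS [k [V [hV hx]]]; exists k, V; split => // i; apply: hS. Qed.

Lemma shift_timelike x h : H4 h ->
  exists2 lam : R, 1 <= lam & lform (x + lam *: h) (x + lam *: h) < 0.
Proof.
move=> [hh _]; set a := lform x h; set c := lform x x.
set lam := `|c| + 2 * `|a| + 1.
have c_ge0 := normr_ge0 c; have a_ge0 := normr_ge0 a.
have ha := ler_norm a; have hc := ler_norm c.
have lam_ge1 : 1 <= lam by rewrite /lam; lra.
exists lam => //.
rewrite !lformE (lformC h x) -/a -/c hh.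
have e1 : 0 <= (lam - 1) * `|c| by apply: mulr_ge0; lra.
have e2 : 0 <= lam * (`|a| - a) by apply: mulr_ge0; lra.
have e3 : lam * lam = lam * `|c| + 2 * (lam * `|a|) + lam by rewrite {2}/lam; ring.
move: e1 e2; rewrite mulrBl mulrBr mul1r => e1 e2.
nra.
Qed.

Lemma timelike_H4 z : lform z z < 0 -> exists2 s : R, s != 0 & H4 (s *: z).
Proof.
move=> hz; set s := (Num.sqrt (- lform z z))^-1.
have s_gt0 : 0 < s by rewrite invr_gt0 sqrtr_gt0 oppr_gt0.
have hs : lform (s *: z) (s *: z) = -1.
  rewrite lformZl lformZr mulrA -expr2 exprVn sqr_sqrtr; last by rewrite oppr_ge0 ltW.
  by rewrite invrN mulNr mulVf // ltr0_neq0.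
case: (H4_or_opp hs) => hH; first by exists s; rewrite ?lt0r_neq0.
by exists (- s); rewrite ?oppr_eq0 ?lt0r_neq0 // scaleNr.
Qed.

Lemma in_span_H4_cap Z : lin_closed Z -> (exists h, H4 h /\ Z h) ->
  forall x, in_span [set x | H4 x /\ Z x] x <-> Z x.
Proof.
move=> hl [h [hh hZh]] x; split.
  move=> [k [V [hV /submxP [D ->]]]]; rewrite mulmx_sum_row.
  by apply: lin_sum => // i; case: (hV i).
move=> hZx; have [lam _ hneg] := shift_timelike x hh.
have [s s_neq0 hw] := timelike_H4 hneg.
exists 2%N, (rowseq_mx 2 [:: h; s *: (x + lam *: h)]); split.
  move=> i; rewrite row_rowseq_mx; case: i => [[|[|//]] Hi] /=; split => //.
  by apply: linZ => //; apply: linD => //; apply: linZ.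
apply/sub_rowseq2P; exists (- lam), s^-1.
by rewrite scalerA mulVf // scale1r scaleNr addrCA addNr addr0.
Qed.

Lemma in_span_kplane m S (V : 'M[R]_(m, 5)) :
  S = [set x | H4 x /\ (x <= V)%MS] -> (exists x, S x) ->
  forall x, in_span S x <-> (x <= V)%MS.
Proof.
move=> hS [x0 hx0]; rewrite hS; apply: in_span_H4_cap; first exact: lin_closed_submx.
by exists x0; move: hx0; rewrite hS.
Qed.

End Span.

Section ThreeD.
Variable R : realType.
Implicit Types (y z w b m : 'rV[R]_3) (A : 'M[R]_3).

Definition cross b y : 'rV[R]_3 :=
  \row_(j < 3) nth 0 [:: b 0 i1 * y 0 i2 - b 0 i2 * y 0 i1;
                        b 0 i2 * y 0 i0 - b 0 i0 * y 0 i2;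
                        b 0 i0 * y 0 i1 - b 0 i1 * y 0 i0] j.

Lemma cross0 b y : cross b y 0 i0 = b 0 i1 * y 0 i2 - b 0 i2 * y 0 i1.
Proof. by rewrite mxE. Qed.
Lemma cross1 b y : cross b y 0 i1 = b 0 i2 * y 0 i0 - b 0 i0 * y 0 i2.
Proof. by rewrite mxE. Qed.
Lemma cross2 b y : cross b y 0 i2 = b 0 i0 * y 0 i1 - b 0 i1 * y 0 i0.
Proof. by rewrite mxE. Qed.

Lemma dot_cross_l b y : dot b (cross b y) = 0.
Proof. by rewrite dot3 cross0 cross1 cross2; ring. Qed.
Lemma dot_cross_r b y : dot y (cross b y) = 0.
Proof. by rewrite dot3 cross0 cross1 cross2; ring. Qed.
Lemma lagrange b y : dot (cross b y) (cross b y) = dot b b * dot y y - dot b y ^+ 2.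
Proof. by rewrite !dot3 cross0 cross1 cross2; ring. Qed.

Lemma cross_frame_decomp b y w :
  dot (cross b y) (cross b y) *: w =
  (dot w b * dot y y - dot w y * dot b y) *: b +
  (dot w y * dot b b - dot w b * dot b y) *: y + dot w (cross b y) *: cross b y.
Proof.
apply: rv3P; rewrite !mxE !dot3 !cross0 !cross1 !cross2 /=; ring.
Qed.

Lemma perp_line b y w : dot b y = 0 -> b != 0 -> y != 0 ->
  dot w b = 0 -> dot w y = 0 ->
  w = (dot w (cross b y) / dot (cross b y) (cross b y)) *: cross b y.
Proof.
move=> hby hb hy hwb hwy; have hb2 := dot_gt0 hb; have hy2 := dot_gt0 hy.
have hm : 0 < dot (cross b y) (cross b y).
  by rewrite lagrange hby expr0n /= subr0 mulr_gt0.
have hg := cross_frame_decomp b y w; rewrite hwb hwy !mul0r subrr !scale0r !add0r in hg.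
have hm0 := lt0r_neq0 hm.
apply: (scalerI hm0); rewrite hg scalerA; congr (_ *: _); by field.
Qed.

Lemma dotM b y A : A *m A^T = 1%:M -> dot (b *m A) (y *m A) = dot b y.
Proof.
move=> hA; rewrite /dot trmx_mul mulmxA -(mulmxA b) hA mulmx1 //.
Qed.

Lemma orth_cross_eigen A b z : A *m A^T = 1%:M -> b *m A = b -> z *m A = z ->
  dot b z = 0 -> b != 0 -> z != 0 -> exists mu, cross b z *m A = mu *: cross b z.
Proof.
move=> A_orth bA zA bz b_neq0 z_neq0.
exists (dot (cross b z *m A) (cross b z) / dot (cross b z) (cross b z)).
apply: perp_line => //.
- by rewrite -{2}bA dotM // dotC dot_cross_l.
- by rewrite -{2}zA dotM // dotC dot_cross_r.
Qed.

Lemma rank_orth_frame b z : b != 0 -> z != 0 -> dot b z = 0 ->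
  \rank (rowseq_mx 3 [:: b; z; cross b z]) = 3%N.
Proof.
move=> b_neq0 z_neq0 bz; have m_gt0 : 0 < dot (cross b z) (cross b z).
  by rewrite lagrange bz expr0n /= subr0 mulr_gt0 ?dot_gt0.
apply: rank_rowseq3 => c1 c2 c3 h0.
have := congr1 (dot b) h0; have := congr1 (dot z) h0; have := congr1 (dot (cross b z)) h0.
rewrite !dotE (dotC z b) bz (dotC (cross b z) b) (dotC (cross b z) z).
rewrite dot_cross_l dot_cross_r !mulr0 !addr0 !add0r => e3 e2 e1; split.
- by apply: (mulIf (lt0r_neq0 (dot_gt0 b_neq0))); rewrite mul0r -e1 mulrC.
- by apply: (mulIf (lt0r_neq0 (dot_gt0 z_neq0))); rewrite mul0r -e2 mulrC.
- by apply: (mulIf (lt0r_neq0 m_gt0)); rewrite mul0r -e3 mulrC.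
Qed.

(* In the frame [b, z, b x z] the map [A] is [diag 1 1 mu], and [det A = 1]
   forces [mu = 1]. *)
Lemma SO3_fixed_frame A b z : A *m A^T = 1%:M -> \det A = 1 ->
  b *m A = b -> z *m A = z -> dot b z = 0 -> b != 0 -> z != 0 -> A = 1%:M.
Proof.
move=> A_orth detA bA zA bz b_neq0 z_neq0.
have [mu mA] := orth_cross_eigen A_orth bA zA bz b_neq0 z_neq0.
set B := rowseq_mx 3 [:: b; z; cross b z].
have B_unit : B \in unitmx by rewrite -row_free_unit /row_free rank_orth_frame.
have BA : B *m A = diag_mx (\row_(j < 3) nth 0 [:: 1; 1; mu] j) *m B.
  apply/row_matrixP => i; rewrite row_mul row_rowseq_mx mul_diag_mx.
  case: i => [[|[|[|//]]] Hi] /=.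
  - by rewrite bA; apply/rowP => j; rewrite !mxE /= mul1r.
  - by rewrite zA; apply/rowP => j; rewrite !mxE /= mul1r.
  - by rewrite mA; apply/rowP => j; rewrite !mxE.
have mu1 : mu = 1.
  have := congr1 determinant BA; rewrite !det_mulmx detA mulr1 det_diag.
  rewrite !big_ord_recl big_ord0 !mxE /= !mul1r mulr1 => h.
  have detB_neq0 : \det B != 0 by move: B_unit; rewrite unitmxE unitfE.
  by apply: (mulIf detB_neq0); rewrite mul1r -h.
have BA1 : B *m A = B.
  apply/row_matrixP => i; rewrite row_mul !row_rowseq_mx.
  by case: i => [[|[|[|//]]] Hi] /=; rewrite ?bA ?zA // mA mu1 scale1r.
by rewrite -[A]mul1mx -(mulVmx B_unit) -mulmxA BA1 mulVmx.
Qed.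

Lemma SO3_fixed_axis A b y : A *m A^T = 1%:M -> \det A = 1 -> A != 1%:M ->
  b *m A = b -> b != 0 -> y *m A = y -> exists lam, y = lam *: b.
Proof.
move=> A_orth detA A_neq1 bA b_neq0 yA.
have bb_neq0 := lt0r_neq0 (dot_gt0 b_neq0).
set z := y - (dot y b / dot b b) *: b.
have [z0|z_neq0] := eqVneq z 0.
  by exists (dot y b / dot b b); apply/eqP; rewrite -subr_eq0 -/z z0.
have zA : z *m A = z by rewrite /z mulmxBl -scalemxAl bA yA.
have bz : dot b z = 0 by rewrite /z !dotE (dotC b y); field.
by move/eqP: A_neq1; case; apply: SO3_fixed_frame bz b_neq0 z_neq0.
Qed.

End ThreeD.

Section ScrewFrame.
Variable R : realType.
Variable b : 'rV[R]_3.
Hypothesis b_neq0 : b != 0.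
Implicit Types (x z : 'rV[R]_5) (y : 'rV[R]_3) (t : R).

Definition E0 : 'rV[R]_5 := mk 0 0 1.
Definition E1 : 'rV[R]_5 := mk 0 1 0.
Definition B0 : 'rV[R]_5 := mk b 0 0.
Definition foot t : 'rV[R]_5 := mk (t *: b) 1 0.
Definition horiz y : 'rV[R]_5 := mk y 0 0.
Definition axial z := exists lam, ys z = lam *: b.

(* In the upper half-space picture: [vert_line t] spans the vertical geodesic
   above [t b], [std_plane t y] the vertical plane above the Euclidean line
   [t b + R y], and [std_hyperplane y] the vertical hyperplane above the
   Euclidean plane spanned by [b] and [y]. *)
Definition vert_line t := rowseq_mx 2 [:: E0; foot t].
Definition std_plane t y := rowseq_mx 3 [:: E0; foot t; horiz y].
Definition std_hyperplane y := rowseq_mx 4 [:: B0; horiz y; E1; E0].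

Lemma axialP z : axial z <-> (z <= rowseq_mx 3 [:: B0; E1; E0])%MS.
Proof.
rewrite sub_rowseq3P; split.
- move=> [lam hl]; exists lam, (uc z), (wc z).
  by apply: ext5; rewrite /B0 /E1 /E0 !coordE ?hl ?scaler0 ?addr0 //; ring.
- by move=> [c1 [c2 [c3 ->]]]; exists c1; rewrite /B0 /E1 /E0 !coordE !scaler0 !addr0.
Qed.

Lemma lin_closed_axial : lin_closed axial.
Proof.
split => [|a x z [l1 h1] [l2 h2]]; first by exists 0; rewrite ys0 scale0r.
by exists (a * l1 + l2); rewrite ysD ysZ h1 h2 scalerDl scalerA.
Qed.

Lemma axial_E0 : axial E0. Proof. by exists 0; rewrite ys_mk scale0r. Qed.
Lemma axial_E1 : axial E1. Proof. by exists 0; rewrite ys_mk scale0r. Qed.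
Lemma axial_B0 : axial B0. Proof. by exists 1; rewrite ys_mk scale1r. Qed.

Lemma axial_sub_std_hyperplane y z : axial z -> (z <= std_hyperplane y)%MS.
Proof.
move/axialP/sub_rowseq3P => [c1 [c2 [c3 ->]]]; apply/sub_rowseq4P.
by exists c1, 0, c2, c3; rewrite scale0r addr0.
Qed.

Lemma E0_sub_vert_line t : (E0 <= vert_line t)%MS.
Proof. by apply/sub_rowseq2P; exists 1, 0; rewrite scale1r scale0r addr0. Qed.

Lemma foot_sub_vert_line t : (foot t <= vert_line t)%MS.
Proof. by apply/sub_rowseq2P; exists 0, 1; rewrite scale1r scale0r add0r. Qed.

Lemma rank_vert_line t : \rank (vert_line t) = 2%N.
Proof.
apply: rank_rowseq2 => c1 c2 h0.
have := congr1 (@uc R) h0; have := congr1 (@wc R) h0.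
by rewrite /E0 /foot !coordE
    ?scale1r ?scale0r ?scaler0 ?mulr0 ?mul0r ?mulr1 ?mul1r ?add0r ?addr0 => c1_0 c2_0; split.
Qed.

Lemma rank_std_plane t y : y != 0 -> \rank (std_plane t y) = 3%N.
Proof.
move=> y_neq0; apply: rank_rowseq3 => c1 c2 c3 h0.
have := congr1 (@uc R) h0; have := congr1 (@wc R) h0; have := congr1 (@ys R) h0.
rewrite /E0 /foot /horiz !coordE
    ?scale1r ?scale0r ?scaler0 ?mulr0 ?mul0r ?mulr1 ?mul1r ?add0r ?addr0 => hy c1_0 c2_0.
move: hy; rewrite c2_0 scale0r add0r => /eqP; rewrite scaler_eq0 (negbTE y_neq0) orbF.
by move/eqP.
Qed.

Lemma rank_std_hyperplane y : y != 0 -> dot b y = 0 ->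
  \rank (std_hyperplane y) = 4%N.
Proof.
move=> y_neq0 yb; apply: rank_rowseq4 => c1 c2 c3 c4 h0.
have := congr1 (@uc R) h0; have := congr1 (@wc R) h0; have := congr1 (@ys R) h0.
rewrite /E0 /E1 /B0 /horiz !coordE
    ?scale1r ?scale0r ?scaler0 ?mulr0 ?mul0r ?mulr1 ?mul1r ?add0r ?addr0 => hy hw hu.
have := congr1 (dot b) hy; have := congr1 (dot y) hy.
rewrite !dotE yb (dotC y b) yb !mulr0 ?addr0 ?add0r => h2 h1; split => //.
- by apply: (mulIf (lt0r_neq0 (dot_gt0 b_neq0))); rewrite mul0r.
- by apply: (mulIf (lt0r_neq0 (dot_gt0 y_neq0))); rewrite mul0r.
Qed.

Lemma sub_std_plane t y z : dot b y = 0 ->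
  (z <= std_plane t y)%MS <->
  dot (ys z) b = t * dot b b * uc z /\ (z <= std_hyperplane y)%MS.
Proof.
move=> yb; rewrite sub_rowseq3P sub_rowseq4P; split.
- move=> [a1 [a2 [a3 ->]]]; split.
    rewrite /E0 /foot /horiz !coordE
        ?scale1r ?scale0r ?scaler0 ?mulr0 ?mul0r ?mulr1 ?mul1r ?add0r ?addr0.
    by rewrite !dotE (dotC y b) yb; ring.
  exists (a2 * t), a3, a2, a1.
  apply: ext5; rewrite /E0 /E1 /B0 /foot /horiz !coordE
      ?scale1r ?scale0r ?scaler0 ?mulr0 ?mul0r ?mulr1 ?mul1r ?add0r ?addr0 //.
  by rewrite scalerA.
- move=> [hc [c1 [c2 [c3 [c4 hz]]]]].
  move: hc; rewrite hz /E0 /E1 /B0 /horiz !coordE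
      ?scale1r ?scale0r ?scaler0 ?mulr0 ?mul0r ?mulr1 ?mul1r ?add0r ?addr0.
  rewrite !dotE (dotC y b) yb mulr0 addr0 => hc.
  have c1E : c1 = c3 * t.
    by apply: (mulIf (lt0r_neq0 (dot_gt0 b_neq0))); rewrite hc; ring.
  exists c4, c3, c2.
  apply: ext5; rewrite /E0 /E1 /B0 /foot /horiz !coordE
      ?scale1r ?scale0r ?scaler0 ?mulr0 ?mul0r ?mulr1 ?mul1r ?add0r ?addr0 //.
  by rewrite c1E scalerA.
Qed.

Lemma axial_std_planeP t y z : y != 0 -> dot b y = 0 ->
  axial z /\ (z <= std_plane t y)%MS <-> (z <= vert_line t)%MS.
Proof.
move=> y_neq0 yb; rewrite sub_rowseq2P sub_rowseq3P; split.
- move=> [[mu hmu] [a1 [a2 [a3 hz]]]]; exists a1, a2.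
  have : ys z = ys z by [].
  rewrite {1}hmu {1}hz /E0 /foot /horiz !coordE
      ?scale1r ?scale0r ?scaler0 ?mulr0 ?mul0r ?mulr1 ?mul1r ?add0r ?addr0.
  move/(congr1 (dot y)); rewrite !dotE (dotC y b) yb !mulr0 add0r => ha3.
  have a3_0 : a3 = 0.
    by apply: (mulIf (lt0r_neq0 (dot_gt0 y_neq0))); rewrite mul0r -ha3.
  by rewrite hz a3_0 scale0r addr0.
- move=> [a1 [a2 hz]]; split.
    by exists (a2 * t); rewrite hz /E0 /foot !coordE ?scaler0 ?add0r scalerA.
  by exists a1, a2, 0; rewrite scale0r addr0.
Qed.

Lemma bpt_sub_std_plane t y :
  (rowseq_mx 3 [:: bpt None; bpt (Some (t *: b)); bpt (Some (t *: b + y)%R)]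
     <= std_plane t y)%MS.
Proof.
apply/row_subP => i; rewrite row_rowseq_mx; apply/sub_rowseq3P.
case: i => [[|[|[|//]]] Hi] /=.
- by exists 1, 0, 0; rewrite scale1r !scale0r !addr0.
- exists (dot (t *: b) (t *: b) / 2), 1, 0.
  by apply: ext5; rewrite /bpt /E0 /foot /horiz !coordE
      ?scale1r ?scale0r ?scaler0 ?mulr0 ?mul0r ?mulr1 ?mul1r ?add0r ?addr0.
- exists (dot (t *: b + y) (t *: b + y) / 2), 1, 1.
  by apply: ext5; rewrite /bpt /E0 /foot /horiz !coordE
      ?scale1r ?scale0r ?scaler0 ?mulr0 ?mul0r ?mulr1 ?mul1r ?add0r ?addr0.
Qed.

Lemma std_plane_sub_bpt t y :
  (std_plane t y <=
     rowseq_mx 3 [:: bpt None; bpt (Some (t *: b)); bpt (Some (t *: b + y)%R)])%MS.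
Proof.
apply/row_subP => i; rewrite row_rowseq_mx; apply/sub_rowseq3P.
case: i => [[|[|[|//]]] Hi] /=.
- by exists 1, 0, 0; rewrite scale1r !scale0r !addr0.
- exists (- (dot (t *: b) (t *: b) / 2)), 1, 0.
  apply: ext5; rewrite /bpt /E0 /foot /horiz !coordE
      ?scale1r ?scale0r ?scaler0 ?mulr0 ?mul0r ?mulr1 ?mul1r ?add0r ?addr0 //.
  ring.
- exists ((dot (t *: b) (t *: b) - dot (t *: b + y) (t *: b + y)) / 2), (-1), 1.
  apply: ext5; rewrite /bpt /E0 /foot /horiz !coordE
      ?scale1r ?scale0r ?scaler0 ?mulr0 ?mul0r ?mulr1 ?mul1r ?add0r ?addr0 //.
  + by rewrite scaleN1r addKr.
  + ring.
  + ring.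
Qed.

Lemma std_hyperplane_of_axial m (K : 'M[R]_(m, 5)) :
  \rank K = 4%N -> (forall z, axial z -> (z <= K)%MS) ->
  exists2 y, y != 0 /\ dot b y = 0 & (K :=: std_hyperplane y)%MS.
Proof.
move=> rK axK.
have : ~~ (K <= rowseq_mx 3 [:: B0; E1; E0])%MS.
  apply/negP => /mxrankS; rewrite rK.
  by have := rank_leq_row (rowseq_mx 3 [:: B0; E1; E0]); lia.
move/row_subPn => [i /negP r_notax]; set r := row i K.
have bb_neq0 := lt0r_neq0 (dot_gt0 b_neq0).
set kap := dot (ys r) b / dot b b.
set y := ys r - kap *: b.
have yb : dot b y = 0 by rewrite /y !dotE (dotC b (ys r)) /kap; field.
have y_neq0 : y != 0.
  apply/eqP => y0; apply: r_notax; apply/axialP; exists kap.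
  by apply/eqP; rewrite -subr_eq0 -/y y0.
exists y => //.
have yK : (horiz y <= K)%MS.
  have -> : horiz y = r - kap *: B0 - uc r *: E1 - wc r *: E0.
    by apply: ext5; rewrite /horiz /B0 /E1 /E0 !coordE ?scaler0 ?mulr0 ?mulr1 ?subr0 // subrr.
  have lK := lin_closed_submx K.
  do 3![apply: (linB lK); last by apply: linZ lK _; apply: axK;
          solve [exact: axial_B0 | exact: axial_E1 | exact: axial_E0]].
  exact: row_sub.
have sHK : (std_hyperplane y <= K)%MS.
  apply/row_subP => j; rewrite row_rowseq_mx.
  by case: j => [[|[|[|[|//]]]] Hj] //=; apply: axK;
    solve [exact: axial_B0 | exact: axial_E1 | exact: axial_E0].
by apply: eqmx_sym; apply: eqmx_sub_rank sHK _; rewrite rank_std_hyperplane // rK.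
Qed.

Lemma lform_vert_line_perp w t z : lform w E0 = 0 -> lform w (foot t) = 0 ->
  (z <= vert_line t)%MS -> lform w z = 0.
Proof. by move=> h1 h2 /sub_rowseq2P [c1 [c2 ->]]; rewrite !lformE h1 h2 !mulr0 addr0. Qed.

Lemma std_plane_of_perp t m (W : 'M[R]_(m, 5)) :
  \rank W = 3%N -> (vert_line t <= W)%MS ->
  (forall p q, axial p -> (q <= W)%MS -> lform p E0 = 0 -> lform p (foot t) = 0 ->
     lform q E0 = 0 -> lform q (foot t) = 0 -> lform p q = 0) ->
  exists2 y, y != 0 /\ dot b y = 0 & (W :=: std_plane t y)%MS.
Proof.
move=> rW sLW perp.
have E0W := submx_trans (E0_sub_vert_line t) sLW.
have footW := submx_trans (foot_sub_vert_line t) sLW.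
have : ~~ (W <= vert_line t)%MS.
  apply/negP => /mxrankS; rewrite rW.
  by have := rank_leq_row (vert_line t); lia.
move/row_subPn => [i /negP r_notL]; set r := row i W.
set y := ys r - uc r *: (t *: b).
set q := mk y 0 (t * dot y b).
have qW : (q <= W)%MS.
  have -> : q = r - uc r *: foot t - wc r *: E0 + (t * dot y b) *: E0.
    apply: ext5; rewrite /q /foot /E0 !coordE ?scaler0 ?mulr0 ?mulr1 ?subr0 ?addr0 //.
    - by rewrite subrr.
    - by rewrite subrr add0r.
  have lW := lin_closed_submx W.
  apply: (linD lW); last exact: linZ lW E0W.
  apply: (linB lW); last exact: linZ lW E0W.
  by apply: (linB lW); [exact: row_sub | exact: linZ lW footW].
have yb : dot b y = 0.
  have ap : axial (mk b 0 (t * dot b b)) by exists 1; rewrite ys_mk scale1r.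
  have := perp _ _ ap qW; rewrite /q /E0 /foot !lform_mk !dotE.
  by move=> h; rewrite -h; ring.
have y_neq0 : y != 0.
  apply/eqP => y0; apply: r_notL; apply/sub_rowseq2P; exists (wc r), (uc r).
  apply: ext5; rewrite /E0 /foot !coordE
      ?scale1r ?scale0r ?scaler0 ?mulr0 ?mul0r ?mulr1 ?mul1r ?add0r ?addr0 //.
  by apply/eqP; rewrite -subr_eq0 -/y y0.
exists y => //.
have sPW : (std_plane t y <= W)%MS.
  apply/row_subP => j; rewrite row_rowseq_mx.
  case: j => [[|[|[|//]]] Hj] //=.
  by rewrite (_ : horiz y = q) // /q /horiz dotC yb mulr0.
by apply: eqmx_sym; apply: eqmx_sub_rank sPW _; rewrite rank_std_plane // rW.
Qed.

Lemma std_plane_perp t y p q : dot b y = 0 -> axial p -> (q <= std_plane t y)%MS ->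
  lform p E0 = 0 -> lform p (foot t) = 0 -> lform p q = 0.
Proof.
move=> yb [lam hp] /sub_rowseq3P [a1 [a2 [a3 ->]]].
rewrite (mk_eta p) hp /E0 /foot /horiz !lformE !lform_mk !dotE yb.
by move=> -> ->; ring.
Qed.

End ScrewFrame.

Arguments E0 {R}.
Arguments E1 {R}.

Lemma pext_fix (R : realType) (A : 'M[R]_3) (z : 'rV[R]_5) : pext A 0 z = z <-> ys z *m A = ys z.
Proof.
rewrite /pext; split => [h | h].
- by rewrite -{2}h ys_mk scaler0 addr0.
- apply: ext5; rewrite !coordE ?scaler0 ?addr0 // !dot3 !mxE; ring.
Qed.

Section Screw.
Variable R : realType.
Variables (g : 'M[R]_5) (A : 'M[R]_3) (b : 'rV[R]_3).
Hypothesis g_isom : isom g.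
Implicit Types (x z : 'rV[R]_5) (p q : option 'rV[R]_3).

Let g_unit : g \in unitmx := isom_unit g_isom.
Let g_free : row_free g. Proof. by rewrite row_free_unit. Qed.

Lemma H4_mulVg x : H4 (x *m invmx g) <-> H4 x.
Proof. exact: H4_isomE (isom_inv g_isom). Qed.

Lemma lform_mulg x z : lform (x *m g) (z *m g) = lform x z.
Proof. exact: g_isom.1. Qed.

Definition geod m (W : 'M[R]_(m, 5)) : set 'rV[R]_5 :=
  [set x | H4 x /\ (x *m g <= W)%MS].

Lemma kplane_geod k S : is_kplane k S ->
  exists W : 'M[R]_(k.+1, 5), [/\ \rank W = k.+1, S = geod W & exists x, S x].
Proof.
move=> [V [rV [-> Sne]]]; exists (V *m g); split => //; first by rewrite mxrankMfree.
by apply: funext => x; apply: propext; rewrite /geod /= submxMfree.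
Qed.

Lemma is_kplane_geod k (W : 'M[R]_(k.+1, 5)) : \rank W = k.+1 ->
  (exists z, H4 z /\ (z <= W)%MS) -> is_kplane k (geod W).
Proof.
move=> rW [z [hz zW]]; exists (W *m invmx g); split.
  by rewrite mxrankMfree // row_free_unit unitmx_inv.
split; last by exists (z *m invmx g); split; [apply/H4_mulVg | rewrite mulmxKV].
apply: funext => x; apply: propext; rewrite /geod /=.
by rewrite -[(x <= _)%MS](submxMfree _ _ g_free) mulmxKV.
Qed.

Lemma in_span_geod m (W : 'M[R]_(m, 5)) x : (exists x, geod W x) ->
  in_span (geod W) x <-> (x *m g <= W)%MS.
Proof.
move=> [x0 [hx0 x0W]]; apply: in_span_H4_cap; last by exists x0.
exact: lin_closed_preim (lin_closed_submx W).
Qed.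

Lemma bmap_surj q : exists p (k : R), 0 < k /\ bpt p *m g = k *: bpt q.
Proof.
have [p [k [k_gt0 hp]]] := bmap_total q (isom_inv g_isom).
exists p, k^-1; split; first by rewrite invr_gt0.
have := congr1 (fun v => k^-1 *: (v *m g)) hp.
by rewrite /= mulmxKV // -scalemxAl scalerA mulVf ?scale1r // lt0r_neq0.
Qed.

Lemma pencil_setP c p :
  (exists q, bmap g p q /\ (q = None \/ exists y, q = Some y /\ dot y b = c)) <->
  dot (ys (bpt p *m g)) b = c * uc (bpt p *m g).
Proof.
split.
- move=> [q [[k [k_gt0 ->]] hq]]; case: hq => [-> | [y [-> hy]]].
    by rewrite /bpt !coordE !dot3 !mxE; ring.
  by rewrite /bpt !coordE dotZl hy mulr1 mulrC.
- move=> h; have [q [k [k_gt0 hpq]]] := bmap_total p g_isom.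
  exists q; split; first by exists k.
  move: h; rewrite hpq; case: q hpq => [y|] hpq h; last by left.
  right; exists y; split => //; move: h; rewrite /bpt !coordE dotZl mulr1 mulrC.
  by move/(mulIf (lt0r_neq0 k_gt0)).
Qed.

Hypotheses (A_orth : A *m A^T = 1%:M) (detA : \det A = 1) (A_neq1 : A != 1%:M).
Hypotheses (bA : b *m A = b) (b_neq0 : b != 0).

Lemma twisting_planeE : twisting_plane g A = [set x | H4 x /\ axial b (x *m g)].
Proof.
apply: funext => x; apply: propext; rewrite /twisting_plane /=.
split => -[hx h]; split => //.
- by move/pext_fix: h => h; apply: (SO3_fixed_axis A_orth detA A_neq1 bA b_neq0 h).
- by apply/pext_fix; case: h => lam ->; rewrite -scalemxAl bA.
Qed.

Lemma in_span_twisting_plane x : in_span (twisting_plane g A) x <-> axial b (x *m g).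
Proof.
rewrite twisting_planeE; apply: (in_span_H4_cap (Z := fun x => axial b (x *m g))).
  exact: lin_closed_preim (lin_closed_axial b).
exists (base_point *m invmx g); split; first by apply/H4_mulVg; exact: H4_base_point.
by rewrite mulmxKV //; exists 0; rewrite /base_point ys_mk scale0r.
Qed.

Lemma twisting_plane_geodI m (W : 'M[R]_(m, 5)) :
  twisting_plane g A `&` geod W = [set x | H4 x /\ (axial b (x *m g) /\ (x *m g <= W)%MS)].
Proof.
apply: funext => x; apply: propext; rewrite twisting_planeE /geod /=.
by split => [[[hx ax] [_ xW]] | [hx [ax xW]]].
Qed.

Lemma vert_line_of_line v (W : 'M[R]_(3, 5)) : bmap g v None ->
  is_line (twisting_plane g A `&` geod W) -> bdry (twisting_plane g A `&` geod W) v ->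
  exists t, forall z, axial b z /\ (z <= W)%MS <-> (z <= vert_line b t)%MS.
Proof.
move=> [k [k_gt0 hv]] [VL [rL [SE Sne]]] hvS.
have spanS x : in_span (twisting_plane g A `&` geod W) x <->
               axial b (x *m g) /\ (x *m g <= W)%MS.
  rewrite twisting_plane_geodI.
  apply: (in_span_H4_cap (Z := fun x => axial b (x *m g) /\ (x *m g <= W)%MS)).
    exact: lin_closedI (lin_closed_preim _ (lin_closed_axial b))
                       (lin_closed_preim _ (lin_closed_submx W)).
  by case: Sne => x0; rewrite twisting_plane_geodI => -[hx0 hZ]; exists x0.
set L := VL *m g.
have LP z : (z <= L)%MS <-> axial b z /\ (z <= W)%MS.
  by rewrite -{1}[z](mulmxKV g_unit) submxMfree // -(in_span_kplane SE Sne) spanS mulmxKV.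
have E0L : (E0 <= L)%MS.
  by move/spanS/LP: hvS; rewrite hv eqmx_scale // lt0r_neq0.
case: Sne => h; rewrite twisting_plane_geodI => -[hh [[lam hlam] hW]].
have [_ hu] := (H4_isomE h g_isom).2 hh.
exists (lam / uc (h *m g)).
have footL : (foot b (lam / uc (h *m g)) <= L)%MS.
  have -> : foot b (lam / uc (h *m g)) = (uc (h *m g))^-1 *: (h *m g - wc (h *m g) *: E0).
    apply: ext5; rewrite /foot /E0 !coordE
        ?scale1r ?scale0r ?scaler0 ?mulr0 ?mul0r ?mulr1 ?mul1r ?add0r ?addr0 ?subr0 ?hlam.
    - by rewrite scalerA mulrC.
    - by rewrite mulVf // lt0r_neq0.
    - by rewrite subrr mulr0.
  apply: scalemx_sub; apply: (linB (lin_closed_submx L)); last exact: linZ (lin_closed_submx L) E0L.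
  by apply/LP; split => //; exists lam.
have LE : (vert_line b (lam / uc (h *m g)) :=: L)%MS.
  apply: eqmx_sub_rank; last by rewrite rank_vert_line mxrankMfree.
  by apply/row_subP => i; rewrite row_rowseq_mx; case: i => [[|[|//]] Hi].
by move=> z; rewrite LE LP.
Qed.

Lemma std_plane_of_orth_through v (W : 'M[R]_(3, 5)) :
  bmap g v None -> \rank W = 3%N -> (exists x, geod W x) ->
  orth_through (twisting_plane g A) (geod W) v ->
  exists t y, [/\ y != 0, dot b y = 0 & (W :=: std_plane b t y)%MS].
Proof.
move=> hv rW Wne [hline [hvS horth]].
have [t LE] := vert_line_of_line hv hline hvS.
have sLW : (vert_line b t <= W)%MS.
  by apply/row_subP => i; have [] := (LE _).2 (row_sub i (vert_line b t)).
suff [y [y_neq0 yb] WE] : exists2 y, y != 0 /\ dot b y = 0 & (W :=: std_plane b t y)%MS.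
  by exists t, y.
apply: (std_plane_of_perp b_neq0 rW sLW) => p q ap qW p0 pf q0 qf.
have perpS w : lform w E0 = 0 -> lform w (foot b t) = 0 ->
    forall z, (twisting_plane g A `&` geod W) z -> lform (w *m invmx g) z = 0.
  move=> w0 wf z; rewrite twisting_plane_geodI => -[_ /LE zL].
  by rewrite -lform_mulg mulmxKV //; apply: lform_vert_line_perp w0 wf zL.
rewrite -[p](mulmxKV g_unit) -[q](mulmxKV g_unit) lform_mulg.
apply: horth (perpS _ p0 pf) (perpS _ q0 qf).
- by apply/in_span_twisting_plane; rewrite mulmxKV.
- by apply/in_span_geod; rewrite ?mulmxKV.
Qed.

Lemma orth_through_of_std_plane v t y (W : 'M[R]_(3, 5)) :
  bmap g v None -> y != 0 -> dot b y = 0 -> (W :=: std_plane b t y)%MS ->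
  (exists x, geod W x) -> orth_through (twisting_plane g A) (geod W) v.
Proof.
move=> [k [k_gt0 hv]] y_neq0 yb WE Wne.
have capE : twisting_plane g A `&` geod W = geod (vert_line b t).
  rewrite twisting_plane_geodI; apply: funext => x; apply: propext; rewrite /geod /=.
  by rewrite WE axial_std_planeP.
set w1 := (t ^+ 2 * dot b b + 1) / 2.
set z1 := w1 *: E0 + foot b t.
have z1H : H4 z1.
  split; last by rewrite /z1 /E0 /foot !coordE mulr0 add0r ltr01.
  by rewrite /z1 /E0 /foot /w1 !lformE !lform_mk !dotE; field.
have z1L : (z1 <= vert_line b t)%MS by apply/sub_rowseq2P; exists w1, 1; rewrite scale1r.
have Lne : exists x, geod (vert_line b t) x.
  by exists (z1 *m invmx g); rewrite /geod /= mulmxKV //; split => //; exact/H4_mulVg.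
rewrite /orth_through /ortho_along capE; split; [|split].
- apply: is_kplane_geod; first exact: rank_vert_line.
  by exists z1.
- by rewrite /bdry /= in_span_geod // hv; apply: scalemx_sub; exact: E0_sub_vert_line.
- move=> p q /in_span_twisting_plane ap /(in_span_geod _ Wne) qW hp _.
  have perpL z : (z <= vert_line b t)%MS -> lform (p *m g) z = 0.
    move=> zL; rewrite -[z](mulmxKV g_unit) lform_mulg.
    by apply: lform_perp_span hp _; apply/in_span_geod; rewrite ?mulmxKV.
  have qP : (q *m g <= std_plane b t y)%MS by move: qW; rewrite WE.
  rewrite -lform_mulg; apply: (std_plane_perp yb ap qP).
  + exact/perpL/E0_sub_vert_line.
  + exact/perpL/foot_sub_vert_line.
Qed.

Lemma half_turn_bank_of_std_plane t y (W : 'M[R]_(3, 5)) :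
  y != 0 -> dot b y = 0 -> (W :=: std_plane b t y)%MS -> (exists x, geod W x) ->
  half_turn_bank g A b (bdry (geod W)).
Proof.
move=> y_neq0 yb WE Wne.
have k0H : (base_point <= std_hyperplane b y)%MS.
  by apply: axial_sub_std_hyperplane; exists 0; rewrite /base_point ys_mk scale0r.
have Hne : exists x, geod (std_hyperplane b y) x.
  exists (base_point *m invmx g); rewrite /geod /= mulmxKV //.
  by split => //; apply/H4_mulVg; exact: H4_base_point.
exists [set p | exists q, bmap g p q /\
          (q = None \/ exists y, q = Some y /\ dot y b = t * dot b b)].
exists (bdry (geod (std_hyperplane b y))).
split; first by exists (t * dot b b).
split.
  exists (geod (std_hyperplane b y)); split; last split => //.
  - apply: is_kplane_geod; first exact: rank_std_hyperplane.
    by exists base_point; split => //; exact: H4_base_point.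
  - move=> x; rewrite twisting_planeE => -[hx ax]; split => //.
    exact: axial_sub_std_hyperplane.
apply: funext => p; apply: propext; rewrite /bdry /=.
by rewrite !in_span_geod // pencil_setP WE sub_std_plane.
Qed.

Lemma std_plane_of_half_turn_bank (W : 'M[R]_(3, 5)) :
  \rank W = 3%N -> (exists x, geod W x) -> half_turn_bank g A b (bdry (geod W)) ->
  exists t y, [/\ y != 0, dot b y = 0 & (W :=: std_plane b t y)%MS].
Proof.
move=> rW Wne [s [_ [[c ->] [[Hh [hHh [PH ->]]] bdryE]]]].
have [K [rK HhE Hne]] := kplane_geod hHh; subst Hh.
have axK z : axial b z -> (z <= K)%MS.
  move=> az; rewrite -[z](mulmxKV g_unit) -in_span_geod //.
  by apply: in_spanS PH _; apply/in_span_twisting_plane; rewrite mulmxKV.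
have [y [y_neq0 yb] KE] := std_hyperplane_of_axial b_neq0 rK axK.
have bb_neq0 := lt0r_neq0 (dot_gt0 b_neq0).
exists (c / dot b b), y; split => //.
have bptE p : (bpt p *m g <= W)%MS <-> (bpt p *m g <= std_plane b (c / dot b b) y)%MS.
  have := congr1 (fun S => S p) bdryE; rewrite /bdry /= => e.
  by rewrite -in_span_geod // e pencil_setP in_span_geod // KE sub_std_plane // divfK.
have bptW q : (bpt q <= std_plane b (c / dot b b) y)%MS -> (bpt q <= W)%MS.
  have [p [k [k_gt0 hpq]]] := bmap_surj q.
  by move: (bptE p); rewrite hpq !eqmx_scale ?lt0r_neq0 // => e /e.
have sPW : (std_plane b (c / dot b b) y <= W)%MS.
  apply: submx_trans (std_plane_sub_bpt b _ y) _.
  apply/row_subP => i; move/row_subP: (bpt_sub_std_plane b (c / dot b b) y) => /(_ i).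
  by rewrite !row_rowseq_mx; case: i => [[|[|[|//]]] Hi]; apply: bptW.
by apply: eqmx_sym; apply: eqmx_sub_rank sPW _; rewrite rank_std_plane // rW.
Qed.

End Screw.

Theorem theorem5p10 (R : realType) (gamma g : 'M[R]_5) (A : 'M[R]_3)
    (b : 'rV[R]_3) (v : option 'rV[R]_3) :
  screw_normal_form gamma g A b v ->
  forall Q : set 'rV[R]_5, is_plane Q ->
    (orth_through (twisting_plane g A) Q v <->
     half_turn_bank g A b (bdry Q)).
Proof.
move=> [_ [g_isom [[A_orth detA] [A_neq1 [[bA b_neq0] [hv _]]]]]] Q.
case/(kplane_geod g_isom) => W [rW -> Wne].
split => [horth | hbank].
- have [t [y [y_neq0 yb WE]]] :=
    std_plane_of_orth_through g_isom A_orth detA A_neq1 bA b_neq0 hv rW Wne horth.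
  exact: (half_turn_bank_of_std_plane g_isom A_orth detA A_neq1 bA b_neq0 y_neq0 yb WE Wne).
- have [t [y [y_neq0 yb WE]]] :=
    std_plane_of_half_turn_bank g_isom A_orth detA A_neq1 bA b_neq0 rW Wne hbank.
  exact: (orth_through_of_std_plane g_isom A_orth detA A_neq1 bA b_neq0 hv y_neq0 yb WE Wne).
Qed.
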